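(* Let $T$ be a finite semi-simplicial triangulation of a compact surface, possibly with boundary, and let $\Delta: E(T) \to \mathbb{R}$ satisfy: (1) $\Delta(e) > 0$ for all $e \in E(T)$; (2) for every set of faces $\mathcal{F} \subseteq F(T)$, writing $E(\mathcal{F})$ for the set of edges incident to some face in $\mathcal{F}$, $\sum_{e \in E(\mathcal{F})} \Delta(e) \ge \pi |\mathcal{F}|$, with equality if and only if $\mathcal{F} = F(T)$ or $E(\mathcal{F}) = \emptyset$. Consider the linear program in real variables $u_t$ ($t \in F(T)$), $v_e$ ($e \in E(T)$): maximize $$F(\mathbf{u},\mathbf{v}) = \pi \sum_{t \in F(T)} u_t + \sum_{e \in E(T)} \Delta(e) v_e$$ subject to $u_t + v_e \le 0$ whenever $e$ is an edge of $t$, and $$3\sum_{t \in F(T)} u_t + 2\sum_{e \in E(T),\, e \notin \partial T} v_e + \sum_{e \in E(T),\, e \in \partial T} v_e \le -1 .$$ Then the optimal value of the objective of this program is strictly negative.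
   Context: A semi-simplicial triangulation is one in which distinct closed cells may intersect in a collection of lower-dimensional cells; $E(T)$, $F(T)$ denote edges and faces of $T$, and $e \in \partial T$ means $e$ is a boundary edge (incident to only one face). *)

From HB Require Import structures.
From mathcomp Require Import all_boot all_order all_algebra.
From mathcomp Require Import reals trigo.
Set Implicit Arguments. Unset Strict Implicit. Unset Printing Implicit Defensive.
Import Order.TTheory GRing.Theory Num.Theory.
Local Open Scope ring_scope.

(* A finite semi-simplicial triangulation is described combinatorially by its
   finite set of faces F, finite set of edges E, and the map [side t i] giving
   the i-th side (i < 3) of the triangular face t.  Sides are counted with
   multiplicity (a semi-simplicial face may have two sides glued to the same edge). *)

Definition ninc (F E : finType) (side : F -> 'I_3 -> E) (e : E) : nat :=
  #|[set p : F * 'I_3 | side p.1 p.2 == e]|.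

Definition is_boundary (F E : finType) (side : F -> 'I_3 -> E) (e : E) : bool :=
  ninc side e == 1%N.

Definition surface_triangulation (F E : finType) (side : F -> 'I_3 -> E) : Prop :=
  (0 < #|F|)%N /\ forall e : E, ninc side e = 1%N \/ ninc side e = 2%N.

Definition edges_of (F E : finType) (side : F -> 'I_3 -> E) (A : {set F}) : {set E} :=
  [set e | [exists t in A, exists i : 'I_3, side t i == e]].

Definition admissible_angles (R : realType) (F E : finType) (side : F -> 'I_3 -> E)
    (Delta : E -> R) : Prop :=
  (forall e, 0 < Delta e) /\
  (forall A : {set F},
     pi * (#|A|%:R) <= \sum_(e in edges_of side A) Delta e /\
     (\sum_(e in edges_of side A) Delta e = pi * (#|A|%:R) <->
        A = setT \/ edges_of side A = set0)).

Definition lp_feasible (R : realType) (F E : finType) (side : F -> 'I_3 -> E)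
    (u : F -> R) (v : E -> R) : Prop :=
  (forall (t : F) (i : 'I_3), u t + v (side t i) <= 0) /\
  3%:R * (\sum_(t : F) u t)
    + 2%:R * (\sum_(e : E | ~~ is_boundary side e) v e)
    + \sum_(e : E | is_boundary side e) v e <= -1.

Definition lp_objective (R : realType) (F E : finType) (Delta : E -> R)
    (u : F -> R) (v : E -> R) : R :=
  pi * (\sum_(t : F) u t) + \sum_(e : E) Delta e * v e.

From HB Require Import structures.
From mathcomp Require Import all_boot all_order all_algebra.
From mathcomp Require Import reals trigo ring lra.
Set Implicit Arguments. Unset Strict Implicit. Unset Printing Implicit Defensive.
Import Order.TTheory GRing.Theory Num.Theory.
Local Open Scope ring_scope.

(* The directions (u, v) with u_t + v_e <= 0 on every side form a cone which,
   modulo the line spanned by (1, -1), is generated by the rays (0, -1_e) for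
   edges e and (-1_B, 1_{edges all of whose faces lie in B}) for face sets B;
   the objective vanishes on that line because sum Delta = pi |F|.  The
   normalising constraint reads K(u, v) <= -1, where K is the sum of all the
   side constraints, so the optimum is the largest ratio obj / (-K) over the
   rays with K < 0, attained at a rescaled ray.  Hypothesis (2) makes the
   objective nonpositive on every ray and zero only on rays with K = 0, so this
   ratio is negative. *)

Lemma exists_max_ratio (R : realFieldType) (C : finType) (f k : C -> R) (c0 : C) :
  0 < k c0 -> (forall c, 0 <= k c) -> (forall c, f c <= 0) ->
  (forall c, f c = 0 -> k c = 0) ->
  exists2 c, 0 < k c & f c < 0 /\ forall c', f c' <= f c / k c * k c'.
Proof.
move=> kc0 k_ge0 f_le0 f_eq0.
have [c kc c_max] := @arg_maxP _ _ _ c0 (fun c => 0 < k c) (fun c => f c / k c) kc0.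
exists c => //; split.
  by rewrite lt_def f_le0 andbT eq_sym; apply: contraTneq kc => /f_eq0 ->; rewrite ltxx.
move=> c'; have := k_ge0 c'; rewrite le0r => /orP [/eqP ->|kc'].
  by rewrite mulr0 f_le0.
by rewrite -ler_pdivrMr //; exact: c_max.
Qed.

Section Cone.
Variables (R : realFieldType) (F E : finType) (side : F -> 'I_3 -> E).
Implicit Types (a u : F -> R) (b v : E -> R) (A B : {set F}).

Definition pairing a b u v : R := \sum_t a t * u t + \sum_e b e * v e.

Lemma pairing_sub a b u v u' v' d :
  pairing a b (fun t => u t - d * u' t) (fun e => v e - d * v' e) =
  pairing a b u v - d * pairing a b u' v'.
Proof.
rewrite /pairing (eq_bigr (fun t => a t * u t - d * (a t * u' t))) => [|t _]; last by ring.
rewrite (eq_bigr (fun e => b e * v e - d * (b e * v' e))) => [|e _]; last by ring.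
by rewrite !sumrB -!mulr_sumr; ring.
Qed.

Lemma pairingZ a b k u v :
  pairing a b (fun t => k * u t) (fun e => k * v e) = k * pairing a b u v.
Proof.
rewrite /pairing (eq_bigr (fun t => k * (a t * u t))) => [|t _]; last by ring.
rewrite (eq_bigr (fun e => k * (b e * v e))) => [|e _]; last by ring.
by rewrite -!mulr_sumr mulrDr.
Qed.

Lemma pairing_combine a1 b1 a2 b2 r u v :
  pairing (fun t => a1 t + r * a2 t) (fun e => b1 e + r * b2 e) u v =
  pairing a1 b1 u v + r * pairing a2 b2 u v.
Proof.
rewrite /pairing (eq_bigr (fun t => a1 t * u t + r * (a2 t * u t))) => [|t _]; last by ring.
rewrite (eq_bigr (fun e => b1 e * v e + r * (b2 e * v e))) => [|e _]; last by ring.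
by rewrite !big_split -!mulr_sumr /=; ring.
Qed.

Definition side_cone u v := forall t i, u t + v (side t i) <= 0.

Lemma side_coneZ k u v :
  0 <= k -> side_cone u v -> side_cone (fun t => k * u t) (fun e => k * v e).
Proof. by move=> k_ge0 uv t i; rewrite -mulrDr mulr_ge0_le0. Qed.

Definition ray_u (c : {set F} + E) (t : F) : R :=
  if c is inl B then - (t \in B)%:R else 0.

Definition ray_v (c : {set F} + E) (e : E) : R :=
  match c with
  | inl B => (e \notin edges_of side (~: B))%:R
  | inr e0 => - (e == e0)%:R
  end.

Lemma mem_edges_of A t i : t \in A -> side t i \in edges_of side A.
Proof.
by move=> tA; rewrite inE; apply/existsP; exists t; rewrite tA; apply/existsP; exists i.
Qed.

Lemma side_cone_ray c : side_cone (ray_u c) (ray_v c).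
Proof.
move=> t i; case: c => [B|e0] /=; last by rewrite add0r oppr_le0.
have [tB|tB] := boolP (t \in B).
  by case: (_ \notin _); rewrite ?addNr ?addr0 ?oppr_le0.
by rewrite (@mem_edges_of (~: B)) ?inE //= oppr0 add0r.
Qed.

Lemma pairing_edge_ray a b e : pairing a b (ray_u (inr e)) (ray_v (inr e)) = - b e.
Proof.
rewrite /pairing big1 => [|t _]; last by rewrite mulr0.
rewrite add0r (bigD1 e) //= eqxx mulrN1 big1 ?addr0 // => e' /negbTE ->.
by rewrite oppr0 mulr0.
Qed.

Lemma side_cone_sub_ray u v B d :
  side_cone u v -> (forall t t', t \in B -> t' \notin B -> u t + d <= u t') ->
  side_cone (fun t => u t - d * ray_u (inl B) t) (fun e => v e - d * ray_v (inl B) e).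
Proof.
move=> uv low t i /=; have := uv t i.
have [tB|tB] := boolP (t \in B); last first.
  by rewrite (@mem_edges_of (~: B)) ?inE //= oppr0 !mulr0 !subr0.
have [e_in|_] := boolP (side t i \in edges_of side (~: B)); last by rewrite /= mulr1n; lra.
move: e_in; rewrite inE => /existsP [t' /andP [t'B /existsP [i' /eqP <-]]].
have := uv t' i'; have := low t t' tB; rewrite -in_setC t'B => /(_ isT).
by rewrite /= mulr1n mulr0; lra.
Qed.

Section ConeBound.
Variables (a : F -> R) (b : E -> R).
Hypothesis cover : forall e, exists t i, side t i = e.
Hypothesis balanced : \sum_t a t = \sum_e b e.
Hypothesis ray_le0 : forall c, pairing a b (ray_u c) (ray_v c) <= 0.

Lemma pairing_le0_const u v mu :
  (forall t, u t = mu) -> side_cone u v -> pairing a b u v <= 0.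
Proof.
move=> u_mu uv; rewrite /pairing (eq_bigr (fun t => a t * mu)) => [|t _]; last by rewrite u_mu.
rewrite -mulr_suml balanced mulr_suml -big_split /=.
apply: sumr_le0 => e _; rewrite -mulrDr; apply: mulr_ge0_le0.
  by rewrite -oppr_le0 -(pairing_edge_ray a) ray_le0.
by have [t [i <-]] := cover e; rewrite -(u_mu t) uv.
Qed.

(* Raising the faces at or below [mu] to the next level of [u] subtracts a
   positive multiple of the ray [inl (~: A)]. *)
Lemma pairing_le0_above n u v mu :
  (forall t, mu <= u t) -> (#|[set t | (mu < u t)%R]| <= n)%N ->
  side_cone u v -> pairing a b u v <= 0.
Proof.
elim: n u v mu => [|n IHn] u v mu mu_le; set A := [set t | mu < u t] => A_le uv.
  apply: (@pairing_le0_const _ _ mu) => // t; apply/eqP; rewrite eq_le mu_le andbT.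
  have: t \notin A by move: A_le; rewrite leqn0 cards_eq0 => /eqP A0; rewrite A0 inE.
  by rewrite inE leNgt.
have [A0|[t1 t1A]] := set_0Vmem A; first by apply: (IHn _ _ mu); rewrite // -/A A0 cards0.
have [t2 t2A t2_min] : exists2 t2, t2 \in A & forall t, t \in A -> u t2 <= u t.
  by case: (arg_minP u t1A) => t2; exists t2.
have mu_t2 : mu < u t2 by rewrite inE in t2A.
pose d := u t2 - mu.
pose u' t := u t - d * ray_u (inl (~: A)) t.
pose v' e := v e - d * ray_v (inl (~: A)) e.
have low t t' : t \in ~: A -> t' \notin ~: A -> u t + d <= u t'.
  rewrite !in_setC negbK => tA /t2_min; move: tA; rewrite inE -leNgt /d; lra.
have uv' : side_cone u' v' by apply: side_cone_sub_ray.
have -> : pairing a b u v = pairing a b u' v' + d * pairing a b (ray_u (inl (~: A))) (ray_v (inl (~: A))).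
  by rewrite pairing_sub subrK.
have d_ge0 : 0 <= d by rewrite subr_ge0 ltW.
rewrite -[0]addr0; apply: lerD; last exact: mulr_ge0_le0.
apply: (IHn _ _ (u t2)) => //.
  move=> t; rewrite /u' /= !inE; have [tA|_] := boolP (mu < u t); rewrite /=.
    by have := t2_min t; rewrite inE => /(_ tA); lra.
  by have := mu_le t; rewrite /d; lra.
have sub : [set t | u t2 < u' t] \subset A :\ t2.
  apply/subsetP => t; rewrite !inE /u' /= !inE; have [tA|tA] := boolP (mu < u t).
    by rewrite /= andbT; apply: contraTneq => ->; lra.
  by rewrite -leNgt in tA; rewrite /= andbF /d; lra.
apply: leq_trans (subset_leq_card sub) _.
by move: A_le; rewrite (cardsD1 t2 A) t2A.
Qed.

Lemma pairing_le0_cone u v : side_cone u v -> pairing a b u v <= 0.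
Proof.
have [mu mu_le] : exists mu, forall t, mu <= u t.
  case: (pickP (@predT F)) => [t0 _|F0]; last by exists 0 => t; have := F0 t.
  have [tm _ tm_min] := @arg_minP _ _ _ t0 xpredT u isT.
  by exists (u tm) => t; apply: tm_min.
by move=> uv; apply: (pairing_le0_above mu_le (max_card _)).
Qed.

End ConeBound.
End Cone.

Arguments ray_u {R F E} c t.
Arguments ray_v {R F E} side c e.

Section Triangulation.
Variables (R : realType) (F E : finType) (side : F -> 'I_3 -> E) (Delta : E -> R).
Implicit Types (u : F -> R) (v : E -> R).

Lemma sum_over_sides (g : E -> R) :
  \sum_(p : F * 'I_3) g (side p.1 p.2) = \sum_e (ninc side e)%:R * g e.
Proof.
rewrite (partition_big (fun p : F * 'I_3 => side p.1 p.2) xpredT) //=.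
apply: eq_bigr => e _; rewrite (eq_bigr (fun _ => g e)) => [|p /eqP -> //].
rewrite sumr_const mulr_natl /ninc; congr (_ *+ _).
by apply: eq_card => p; rewrite !inE.
Qed.

Lemma sum_ninc : \sum_e (ninc side e)%:R = 3%:R * #|F|%:R :> R.
Proof.
under eq_bigr do rewrite -[_%:R]mulr1.
by rewrite -(sum_over_sides (fun=> 1)) sumr_const card_prod card_ord natrM mulrC.
Qed.

Definition corner_form : (F -> R) -> (E -> R) -> R :=
  pairing (fun=> 3%:R) (fun e => (ninc side e)%:R).

Lemma corner_formE u v :
  corner_form u v = \sum_(p : F * 'I_3) (u p.1 + v (side p.1 p.2)).
Proof.
rewrite big_split /= sum_over_sides -(pair_big xpredT xpredT (fun t _ => u t)) /=.
congr (_ + _); apply: eq_bigr => t _.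
by rewrite sumr_const card_ord mulr_natl.
Qed.

Lemma corner_form_le0 u v : side_cone side u v -> corner_form u v <= 0.
Proof. by move=> uv; rewrite corner_formE sumr_le0 // => p _; apply: uv. Qed.

Lemma lp_objectiveE u v : lp_objective Delta u v = pairing (fun=> pi) Delta u v.
Proof. by rewrite /lp_objective /pairing mulr_sumr. Qed.

Hypothesis surface : surface_triangulation side.

Lemma ninc_gt0 e : (0 < ninc side e)%N.
Proof. by case: surface => _ /(_ e) [] ->. Qed.

Lemma surface_cover e : exists t i, side t i = e.
Proof.
have := ninc_gt0 e; rewrite /ninc card_gt0 => /set0Pn [p].
by rewrite inE => /eqP <-; exists p.1, p.2.
Qed.

Lemma lp_constraintE u v :
  3%:R * (\sum_t u t) + 2%:R * (\sum_(e | ~~ is_boundary side e) v e)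
    + \sum_(e | is_boundary side e) v e = corner_form u v.
Proof.
rewrite /corner_form /pairing -mulr_sumr [X in _ = _ + X](bigID (is_boundary side)).
rewrite [X in _ = _ + X]addrC addrA /=.
congr (_ + _ + _); rewrite ?mulr_sumr; apply: eq_bigr => e.
  by rewrite /is_boundary; case: surface => _ /(_ e) [] ->.
by move=> /eqP ->; rewrite mul1r.
Qed.

Lemma lp_feasibleE u v :
  lp_feasible side u v <-> side_cone side u v /\ corner_form u v <= -1.
Proof. by rewrite /lp_feasible lp_constraintE. Qed.

Lemma edges_of_setT : edges_of side setT = setT.
Proof.
apply/setP => e; rewrite in_setT; have [t [i <-]] := surface_cover e.
by rewrite mem_edges_of ?inE.
Qed.

Lemma lp_feasible_normalized_ray c k :
  corner_form (ray_u c) (ray_v side c) = - k -> 0 < k ->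
  lp_feasible side (fun t => k^-1 * ray_u c t) (fun e => k^-1 * ray_v side c e).
Proof.
move=> K_c k_gt0; apply/lp_feasibleE; split.
  by apply: side_coneZ; [rewrite invr_ge0 ltW | exact: side_cone_ray].
by rewrite /corner_form pairingZ -/(corner_form _ _) K_c mulrN mulVf ?gt_eqF.
Qed.

Hypothesis admissible : admissible_angles side Delta.

Lemma sum_Delta : \sum_e Delta e = pi * #|F|%:R.
Proof.
case: admissible => _ /(_ setT) [_ [_ /(_ (or_introl erefl))]].
by rewrite edges_of_setT cardsT => <-; apply: eq_bigl => e; rewrite inE.
Qed.

Lemma objective_set_ray B :
  lp_objective Delta (ray_u (inl B : {set F} + E)) (ray_v side (inl B)) =
  pi * #|~: B|%:R - \sum_(e in edges_of side (~: B)) Delta e.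
Proof.
rewrite /lp_objective /= sumrN.
rewrite (eq_bigr (fun t => if t \in B then 1 else 0)) => [|t _]; last by case: (t \in B).
rewrite (eq_bigr (fun e => if e \notin edges_of side (~: B) then Delta e else 0)) => [|e _];
  last by case: (_ \notin _); rewrite ?mulr1 ?mulr0.
rewrite -!big_mkcond sumr_const.
have := sum_Delta; rewrite (bigID (mem (edges_of side (~: B)))) /= => sum_split.
have -> : #|~: B|%:R = #|F|%:R - #|B|%:R :> R by rewrite -(cardsC B) natrD; ring.
by rewrite mulrBr -sum_split mulrN; ring.
Qed.

Lemma objective_ray_le0 c : lp_objective Delta (ray_u c) (ray_v side c) <= 0.
Proof.
case: c => [B|e].
  by rewrite objective_set_ray subr_le0; case: admissible => _ /(_ (~: B)) [].
by rewrite lp_objectiveE pairing_edge_ray oppr_le0 ltW //; case: admissible.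
Qed.

Lemma corner_form_ray_eq0 c :
  lp_objective Delta (ray_u c) (ray_v side c) = 0 ->
  corner_form (ray_u c) (ray_v side c) = 0.
Proof.
case: c => [B|e]; last first.
  rewrite lp_objectiveE pairing_edge_ray => /eqP; rewrite oppr_eq0 gt_eqF //.
  by case: admissible.
rewrite objective_set_ray => /eqP; rewrite subr_eq0 => /eqP /esym eq_pi.
case: admissible => _ /(_ (~: B)) [_ [/(_ eq_pi) full_or_empty _]].
rewrite corner_formE big1 // => -[t i] _ /=.
case: full_or_empty => [BC|E0].
  have tB : t \in ~: B by rewrite BC inE.
  by rewrite (mem_edges_of side i tB); rewrite inE in tB; rewrite (negbTE tB) oppr0 addr0.
have : side t i \notin edges_of side (~: B) by rewrite E0 inE.
by move/(contra (mem_edges_of side i)); rewrite inE negbK => ->; rewrite E0 inE /= addNr.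
Qed.

Lemma objective_le_corner_form rho :
  (forall c, lp_objective Delta (ray_u c) (ray_v side c)
               + rho * corner_form (ray_u c) (ray_v side c) <= 0) ->
  forall u v, side_cone side u v -> lp_objective Delta u v + rho * corner_form u v <= 0.
Proof.
move=> ray_le0 u v uv; rewrite lp_objectiveE /corner_form -pairing_combine.
apply: (pairing_le0_cone surface_cover) uv => [|c].
  rewrite sumr_const big_split /= -mulr_sumr sum_Delta sum_ninc -mulr_natr; ring.
by rewrite pairing_combine -lp_objectiveE ray_le0.
Qed.

End Triangulation.

Theorem theorem3p4 (R : realType) (F E : finType) (side : F -> 'I_3 -> E)
    (Delta : E -> R) :
  surface_triangulation side ->
  admissible_angles side Delta ->
  exists (u : F -> R) (v : E -> R),
    [/\ lp_feasible side u v,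
        lp_objective Delta u v < 0 &
        forall (u' : F -> R) (v' : E -> R),
          lp_feasible side u' v' -> lp_objective Delta u' v' <= lp_objective Delta u v].
Proof.
move=> surface admissible.
pose f c : R := lp_objective Delta (ray_u c) (ray_v side c).
pose k c : R := - corner_form side (ray_u c) (ray_v side c).
have /card_gt0P [t0 _] := proj1 surface.
have k_edge : 0 < k (inr (side t0 ord0)).
  by rewrite /k /corner_form pairing_edge_ray opprK ltr0n ninc_gt0.
have k_ge0 c : 0 <= k c by rewrite oppr_ge0; apply/corner_form_le0/side_cone_ray.
have f_eq0 c : f c = 0 -> k c = 0.
  by rewrite /k => /(corner_form_ray_eq0 surface admissible) ->; rewrite oppr0.
have [c kc [fc_lt0 fc_max]] :=
  exists_max_ratio k_edge k_ge0 (objective_ray_le0 surface admissible) f_eq0.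
set rho := f c / k c in fc_max.
have rho_lt0 : rho < 0 by rewrite /rho pmulr_llt0 ?invr_gt0.
exists (fun t => (k c)^-1 * ray_u c t), (fun e => (k c)^-1 * ray_v side c e).
rewrite lp_objectiveE pairingZ -lp_objectiveE mulrC -/rho; split => //.
  by apply: lp_feasible_normalized_ray; rewrite ?opprK.
move=> u' v' /(lp_feasibleE surface) [uv K_le].
have ray_bound c' : f c' + rho * corner_form side (ray_u c') (ray_v side c') <= 0.
  by have := fc_max c'; rewrite /f /k mulrN; lra.
by have := objective_le_corner_form surface admissible ray_bound uv; nra.
Qed.
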